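(* Let $A,A^*$ be a Leonard pair in $\mathcal A$. Then there exists a unique antiautomorphism $\dagger$ of $\mathcal A$ such that $A^\dagger=A$ and $A^{*\dagger}=A^*$. Moreover $X^{\dagger\dagger}=X$ for all $X\in\mathcal A$.
   Context: Let $\mathbb K$ be a field, $d\ge0$, and $\mathcal A$ a $\mathbb K$-algebra isomorphic to $\mathrm{Mat}_{d+1}(\mathbb K)$. A Leonard pair in $\mathcal A$ is an ordered pair $A,A^*\in\mathcal A$ ($A^*$ is notation, not an adjoint) that acts on an irreducible (left) $\mathcal A$-module $V$ as follows: (a) some basis of $V$ makes the matrix of $A$ irreducible tridiagonal (tridiagonal with all sub- and superdiagonal entries nonzero) and the matrix of $A^*$ diagonal, and (b) some basis of $V$ makes the matrix of $A^*$ irreducible tridiagonal and that of $A$ diagonal. An antiautomorphism of $\mathcal A$ is a $\mathbb K$-linear bijection $\gamma:\mathcal A\to\mathcal A$ with $(XY)^\gamma=Y^\gamma X^\gamma$ for all $X,Y$. *)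

From HB Require Import structures.
From mathcomp Require Import all_boot all_order all_algebra.
Set Implicit Arguments. Unset Strict Implicit. Unset Printing Implicit Defensive.
Import GRing.Theory.
Local Open Scope ring_scope.

Definition irr_tridiag (K : fieldType) (n : nat) (M : 'M[K]_n) : Prop :=
  (forall i j : 'I_n, (i.+1 < j)%N \/ (j.+1 < i)%N -> M i j = 0) /\
  (forall i j : 'I_n, (i.+1 == j :> nat) || (j.+1 == i :> nat) -> M i j != 0).

Definition mx_alg_iso (K : fieldType) (A : algType K) (d : nat)
  (rho : A -> 'M[K]_(d.+1)) : Prop :=
  [/\ forall (c : K) (x : A), rho (c *: x) = c *: rho x,
      forall x y : A, rho (x + y) = rho x + rho y,
      forall x y : A, rho (x * y) = rho x *m rho y,
      rho 1 = 1%:M & bijective rho].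

(* An irreducible A-module
   V is (up to isomorphism) K^{d+1} with A acting through an algebra
   isomorphism rho : A -> Mat_{d+1}(K); a basis of V is given by an invertible
   change-of-basis matrix P, in which the matrix of X is P^-1 (rho X) P. *)
Definition leonard_pair (K : fieldType) (A : algType K) (d : nat) (a as_ : A)
  : Prop :=
  exists rho : A -> 'M[K]_(d.+1), mx_alg_iso rho /\
   (exists P : 'M[K]_(d.+1), P \in unitmx /\
      irr_tridiag (invmx P *m rho a *m P) /\ is_diag_mx (invmx P *m rho as_ *m P)) /\
   (exists Q : 'M[K]_(d.+1), Q \in unitmx /\
      irr_tridiag (invmx Q *m rho as_ *m Q) /\ is_diag_mx (invmx Q *m rho a *m Q)).

Definition antiautomorphism (K : fieldType) (A : algType K) (g : A -> A) : Prop :=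
  [/\ forall (c : K) (x : A), g (c *: x) = c *: g x,
      forall x y : A, g (x + y) = g x + g y,
      bijective g &
      forall x y : A, g (x * y) = g y * g x].

From HB Require Import structures.
From mathcomp Require Import all_boot all_order all_algebra.
Set Implicit Arguments. Unset Strict Implicit. Unset Printing Implicit Defensive.
Import GRing.Theory.
Local Open Scope ring_scope.

(* In a basis where A is an irreducible tridiagonal matrix T and A^* a
   diagonal matrix D, transposition fixes D, and it fixes T once it is
   conjugated by a diagonal matrix S balancing the sub- and superdiagonals
   (S T^T = T S).  Hence X |-> S X^T S^-1 is an involutive antiautomorphism
   fixing A and A^*.

   For uniqueness, composing two such antiautomorphisms gives an algebra
   endomorphism fixing T and D.  Since A^* is also irreducible tridiagonal in
   some basis, its eigenspaces are lines, so the diagonal entries of D are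
   distinct.  The endomorphism then fixes every polynomial in D, hence every
   diagonal matrix unit E_ii (Lagrange interpolation), hence
   E_ij = T_ij^-1 E_ii T E_jj for |i - j| = 1, and, taking products, every
   matrix unit: it is the identity. *)

Section IrreducibleTridiagonal.

Variables (K : fieldType) (n : nat).
Implicit Types (T : 'M[K]_n.+1).

Lemma irr_tridiag_eigenvector_eq0 T (c : K) (v : 'cV[K]_n.+1) :
  irr_tridiag T -> T *m v = c *: v -> v 0 0 = 0 -> v = 0.
Proof.
move=> [T0 Tn0] Tv v0.
suff v_eq0 k (i : 'I_n.+1) : (i <= k)%N -> v i 0 = 0.
  by apply/matrixP=> i j; rewrite (ord1 j) mxE (v_eq0 i).
elim: k i => [|k IHk] i.
  by rewrite leqn0 => /eqP i0; rewrite -v0; congr (v _ _); apply: val_inj.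
rewrite leq_eqVlt ltnS => /orP[/eqP ik|]; last exact: IHk.
have kn : (k < n.+1)%N by apply: ltnW; rewrite -ik.
pose k' := Ordinal kn.
have := congr1 (fun w : 'cV_n.+1 => w k' 0) Tv; rewrite !mxE (IHk k') // mulr0.
rewrite (bigD1 i) //= big1 => [|j ji].
  by rewrite addr0 => /eqP; rewrite mulf_eq0 (negPf (Tn0 k' i _)) ?ik ?eqxx // => /eqP.
case: (leqP j k) => [jk|kj]; first by rewrite IHk ?mulr0.
rewrite T0 ?mul0r //; left; rewrite ltn_neqAle kj andbT.
by apply: contraNneq ji => kj'; apply/eqP/val_inj; rewrite /= ik -kj'.
Qed.

Lemma irr_tridiag_similar_diag_inj (B P Q : 'M[K]_n.+1) :
  P \in unitmx -> Q \in unitmx ->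
  irr_tridiag (invmx Q *m B *m Q) -> is_diag_mx (invmx P *m B *m P) ->
  injective (fun i => (invmx P *m B *m P) i i).
Proof.
move=> Pu Qu Tirr Ddiag i j /= Dij.
set D := invmx P *m B *m P in Ddiag Dij *; set T := invmx Q *m B *m Q in Tirr.
set M := invmx Q *m P.
have M_unit : M \in unitmx by rewrite unitmx_mul unitmx_inv Qu.
have TM : T *m M = M *m D by rewrite !mulmxA !mulmxK.
have [d Dd] := diag_mxP _ Ddiag.
have eigen k : T *m (M *m delta_mx k (0 : 'I_1)) = D k k *: (M *m delta_mx k 0).
  rewrite mulmxA TM -mulmxA scalemxAr; congr (M *m _).
  apply/matrixP=> l z; rewrite Dd mul_diag_mx !mxE (ord1 z) !eqxx mulr1n andbT.
  by case: eqP => [->|_]; rewrite ?mulr0.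
have [//|ij] := eqVneq i j; exfalso.
set u := M *m delta_mx i (0 : 'I_1); set w := M *m delta_mx j (0 : 'I_1).
have Tw : T *m w = D i i *: w by rewrite eigen Dij.
have uw0 : w 0 0 *: u - u 0 0 *: w = 0.
  apply: (irr_tridiag_eigenvector_eq0 (c := D i i) Tirr); last by rewrite !mxE mulrC subrr.
  by rewrite mulmxBr -!scalemxAr eigen Tw scalerBr !scalerA [w 0 0 * _]mulrC [u 0 0 * _]mulrC.
have Mu : invmx M *m u = delta_mx i 0 by rewrite mulKmx.
have Mw : invmx M *m w = delta_mx j 0 by rewrite mulKmx.
clearbody u w.
have := congr1 (mulmx (invmx M)) uw0.
rewrite mulmxBr -!scalemxAr Mu Mw mulmx0 => /matrixP/(_ i 0).
rewrite !mxE !eqxx (negPf ij) /= mulr1 mulr0 subr0 => w00.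
move: Mw; rewrite (irr_tridiag_eigenvector_eq0 Tirr Tw w00) mulmx0 => /matrixP/(_ j 0).
by rewrite !mxE !eqxx => /eqP; rewrite eq_sym oner_eq0.
Qed.

Lemma irr_tridiag_symmetrizer T : irr_tridiag T ->
  exists2 s : 'rV[K]_n.+1, (forall i, s 0 i != 0) & diag_mx s *m T^T = T *m diag_mx s.
Proof.
move=> [T0 Tn0].
pose t k := T (inord k.+1) (inord k) / T (inord k) (inord k.+1).
exists (\row_(i < n.+1) \prod_(k < i) t k).
  move=> i; rewrite mxE; apply/prodf_neq0 => k _.
  have kn : (k.+1 < n.+1)%N := leq_ltn_trans (ltn_ord k) (ltn_ord i).
  by rewrite mulf_neq0 ?invr_eq0 ?Tn0 // !inordK ?eqxx ?orbT // ltnW.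
rewrite mul_diag_mx mul_mx_diag; apply/matrixP => i j; rewrite !mxE.
wlog ij : i j / (i <= j)%N.
  move=> sym; case: (leqP i j) => [/sym//|/ltnW/sym e].
  by rewrite mulrC -e mulrC.
case: (ltngtP i j) ij => // [lt_ij _|/val_inj-> _]; last exact: mulrC.
rewrite -!(big_mkord xpredT); have [ji|] := eqVneq (j : nat) i.+1.
  rewrite ji big_nat_recr //= /t -ji !inord_val.
  by rewrite [RHS]mulrC -mulrA mulfVK // Tn0 // ji eqxx.
move=> ji; have lt_ij1 : (i.+1 < j)%N by rewrite ltn_neqAle eq_sym ji.
by rewrite !T0 ?mulr0 ?mul0r //; [left|right].
Qed.

End IrreducibleTridiagonal.

Lemma delta_mx_horner_diag (K : fieldType) (n : nat) (D : 'M[K]_n.+1) (i : 'I_n.+1) :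
  is_diag_mx D -> injective (fun k => D k k) ->
  delta_mx i i = horner_mx D (\prod_(j | j != i) ((D i i - D j j)^-1 *: ('X - (D j j)%:P))).
Proof.
move=> Ddiag Dinj; have [d Dd] := diag_mxP _ Ddiag.
have dD k : d 0 k = D k k by rewrite Dd mxE eqxx mulr1n.
rewrite [X in horner_mx X]Dd horner_mx_diag; apply/matrixP => k l; rewrite !mxE dD horner_prod.
have [<-|kl] := eqVneq k l; last first.
  by case: andP => [[/eqP ki /eqP li]|_]; [case/eqP: kl; rewrite ki li | rewrite mulr0n].
rewrite andbb mulr1n; under eq_bigr do rewrite hornerZ hornerXsubC.
have [->|ki] := eqVneq k i; last by rewrite (bigD1 k) //= subrr mulr0 mul0r.
rewrite big1 // => j ji; rewrite mulVf // subr_eq0.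
by apply: contra ji => /eqP/Dinj ->.
Qed.

Lemma delta_sandwich (R : pzRingType) (n : nat) (X : 'M[R]_n) (i j : 'I_n) :
  delta_mx i i *m X *m delta_mx j j = X i j *: delta_mx i j.
Proof.
apply/matrixP => k l; rewrite !mxE (bigD1 j) //= big1 => [|m mj]; last first.
  by rewrite [delta_mx j j _ _]mxE (negPf mj) mulr0.
rewrite mxE (bigD1 i) //= big1 => [|m mi]; last by rewrite mxE (negPf mi) andbF mul0r.
rewrite !mxE !eqxx !andbT !addr0.
by case: (k == i); case: (l == j); rewrite ?mul1r ?mulr1 ?mul0r ?mulr0.
Qed.

Section FixedPointsOfEndomorphism.

Variables (K : fieldType) (n : nat) (tau : 'M[K]_n.+1 -> 'M[K]_n.+1).
Hypotheses (tauZ : forall c X, tau (c *: X) = c *: tau X)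
  (tauD : forall X Y, tau (X + Y) = tau X + tau Y)
  (tauM : forall X Y, tau (X *m Y) = tau X *m tau Y)
  (tau1 : tau 1%:M = 1%:M).

Lemma endo_fixed_sum (I : Type) (r : seq I) (P : pred I) (F : I -> 'M[K]_n.+1) :
  (forall i, P i -> tau (F i) = F i) -> tau (\sum_(i <- r | P i) F i) = \sum_(i <- r | P i) F i.
Proof.
move=> FP; apply: (big_ind (fun X => tau X = X)) => // [|X Y tX tY].
  by rewrite -(scale0r 0) tauZ !scale0r.
by rewrite tauD tX tY.
Qed.

Lemma endo_fixed_horner_mx (D : 'M[K]_n.+1) (p : {poly K}) :
  tau D = D -> tau (horner_mx D p) = horner_mx D p.
Proof.
move=> tD; elim/poly_ind: p => [|p c IHp].
  by rewrite rmorph0 -(scale0r 0) tauZ !scale0r.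
rewrite rmorphD rmorphM /= horner_mx_X horner_mx_C -mulmxE tauD tauM IHp tD.
by rewrite -scalemx1 tauZ tau1.
Qed.

Variables (T D : 'M[K]_n.+1).
Hypotheses (T_irr : irr_tridiag T) (D_diag : is_diag_mx D)
  (D_inj : injective (fun i => D i i)) (fixT : tau T = T) (fixD : tau D = D).

Lemma endo_fixed_delta_diag i : tau (delta_mx i i) = delta_mx i i.
Proof. by rewrite (delta_mx_horner_diag i D_diag D_inj) endo_fixed_horner_mx. Qed.

Lemma endo_fixed_delta_adj (i j : 'I_n.+1) : (i.+1 == j :> nat) || (j.+1 == i :> nat) ->
  tau (delta_mx i j) = delta_mx i j.
Proof.
move=> ij; have [_ Tn0] := T_irr.
have -> : delta_mx i j = (T i j)^-1 *: (delta_mx i i *m T *m delta_mx j j).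
  by rewrite delta_sandwich scalerA mulVf ?Tn0 // scale1r.
by rewrite tauZ !tauM fixT !endo_fixed_delta_diag.
Qed.

Lemma endo_fixed_delta0 k (j : 'I_n.+1) : j = k :> nat ->
  tau (delta_mx 0 j) = delta_mx 0 j /\ tau (delta_mx j 0) = delta_mx j 0.
Proof.
elim: k j => [|k IHk] j jk.
  by rewrite (_ : j = 0) ?endo_fixed_delta_diag //; apply: val_inj.
have kn : (k < n.+1)%N by apply: ltnW; rewrite -jk.
have [t0k tk0] := IHk (Ordinal kn) erefl.
have adj : (k.+1 == j :> nat) || (j.+1 == k :> nat) by rewrite jk eqxx.
rewrite -(mul_delta_mx (Ordinal kn) 0 j) -(mul_delta_mx (Ordinal kn) j 0) !tauM t0k tk0.
by rewrite !endo_fixed_delta_adj // orbC.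
Qed.

Lemma endo_fixed X : tau X = X.
Proof.
rewrite (matrix_sum_delta X); apply: endo_fixed_sum => i _; apply: endo_fixed_sum => j _.
have [_ ti0] := endo_fixed_delta0 (erefl (i : nat)).
have [t0j _] := endo_fixed_delta0 (erefl (j : nat)).
by rewrite tauZ -(mul_delta_mx (0 : 'I_n.+1) i j) tauM ti0 t0j.
Qed.

End FixedPointsOfEndomorphism.

Definition alg_iso_pair (K : fieldType) (A B : algType K) (rho : A -> B) (rinv : B -> A) :=
  [/\ forall (c : K) x, rho (c *: x) = c *: rho x,
      forall x y, rho (x + y) = rho x + rho y,
      forall x y, rho (x * y) = rho x * rho y,
      cancel rho rinv & cancel rinv rho].

Lemma alg_iso_pair_sym (K : fieldType) (A B : algType K) (rho : A -> B) (rinv : B -> A) :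
  alg_iso_pair rho rinv -> alg_iso_pair rinv rho.
Proof.
case=> rZ rD rM rK rKV; split=> // [c y|y z|y z]; apply: (can_inj rK).
all: by rewrite ?rZ ?rD ?rM !rKV.
Qed.

Lemma antiautomorphism_transport (K : fieldType) (A B : algType K)
    (rho : A -> B) (rinv : B -> A) (f : B -> B) :
  alg_iso_pair rho rinv -> antiautomorphism f -> antiautomorphism (rinv \o f \o rho).
Proof.
move=> rho_iso [fZ fD [finv fK fKV] fM].
have [iZ iD iM _ _] := alg_iso_pair_sym rho_iso; case: rho_iso => rZ rD rM rK rKV.
split=> [c x|x y||x y] /=; rewrite ?rZ ?fZ ?iZ ?rD ?fD ?iD ?rM ?fM ?iM //.
by exists (rinv \o finv \o rho) => x /=; rewrite rKV ?fK ?fKV rK.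
Qed.

Lemma mx_alg_iso_pair (K : fieldType) (A : algType K) (n : nat) (rho : A -> 'M[K]_n.+1) :
  mx_alg_iso rho -> exists rinv, alg_iso_pair rho rinv.
Proof. by case=> rZ rD rM _ [rinv rK rKV]; exists rinv. Qed.

Lemma alg_iso_pair_conj (K : fieldType) (A : algType K) (n : nat)
    (rho : A -> 'M[K]_n.+1) (rinv : 'M[K]_n.+1 -> A) (P : 'M[K]_n.+1) :
  alg_iso_pair rho rinv -> P \in unitmx ->
  alg_iso_pair (fun x => invmx P *m rho x *m P) (fun Y => rinv (P *m Y *m invmx P)).
Proof.
move=> [rZ rD rM rK rKV] Pu; split=> [c x|x y|x y|x|Y].
- by rewrite rZ -scalemxAr -scalemxAl.
- by rewrite rD mulmxDr mulmxDl.
- by rewrite rM -!mulmxE !mulmxA mulmxK.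
- by rewrite !mulmxA mulmxV // mul1mx mulmxK // rK.
- by rewrite rKV !mulmxA mulVmx // mul1mx mulmxKV.
Qed.

Lemma antiautomorphism1 (K : fieldType) (A : algType K) (f : A -> A) :
  antiautomorphism f -> f 1 = 1.
Proof.
case=> _ _ [finv _ fKV] fM.
by have := fM (finv 1) 1; rewrite mulr1 fKV mulr1 => <-.
Qed.

Definition trmx_conj (K : fieldType) (n : nat) (S Y : 'M[K]_n) := S *m Y^T *m invmx S.

Section TransposeConjugation.

Variables (K : fieldType) (n : nat) (S : 'M[K]_n.+1).
Hypotheses (S_unit : S \in unitmx) (S_sym : S^T = S).

Lemma trmx_conjK : involutive (trmx_conj S).
Proof.
move=> Y; rewrite /trmx_conj !trmx_mul trmxK trmx_inv S_sym !mulmxA.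
by rewrite mulmxV // mul1mx mulmxK.
Qed.

Lemma trmx_conj_antiautomorphism : antiautomorphism (trmx_conj S).
Proof.
split=> [c Y|Y Z||Y Z]; rewrite /trmx_conj.
- by rewrite linearZ /= -scalemxAr -scalemxAl.
- by rewrite linearD /= mulmxDr mulmxDl.
- by exists (trmx_conj S); apply: trmx_conjK.
- by rewrite -!mulmxE trmx_mul !mulmxA mulmxKV.
Qed.

End TransposeConjugation.

Lemma trmx_conj_fixed (K : fieldType) (n : nat) (S B : 'M[K]_n) :
  S \in unitmx -> S *m B^T = B *m S -> trmx_conj S B = B.
Proof. by move=> Su SB; rewrite /trmx_conj SB mulmxK. Qed.

Lemma irr_tridiag_diag_trmx_conj (K : fieldType) (n : nat) (T D : 'M[K]_n.+1) :
  irr_tridiag T -> is_diag_mx D ->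
  exists S, [/\ S \in unitmx, S^T = S, trmx_conj S T = T & trmx_conj S D = D].
Proof.
move=> Tirr Ddiag; have [s s_neq0 sT] := irr_tridiag_symmetrizer Tirr.
have Su : diag_mx s \in unitmx.
  by rewrite unitmxE det_diag unitfE; apply/prodf_neq0 => i _; apply: s_neq0.
exists (diag_mx s); split; rewrite ?tr_diag_mx ?trmx_conj_fixed //.
by have [e ->] := diag_mxP _ Ddiag; rewrite tr_diag_mx; apply: diag_mx_comm.
Qed.

Lemma antiautomorphism_mx_uniq (K : fieldType) (n : nat) (T D : 'M[K]_n.+1)
    (f h : 'M[K]_n.+1 -> 'M[K]_n.+1) :
  irr_tridiag T -> is_diag_mx D -> injective (fun i => D i i) ->
  antiautomorphism f -> involutive f -> f T = T -> f D = D ->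
  antiautomorphism h -> h T = T -> h D = D -> h =1 f.
Proof.
move=> Tirr Ddiag Dinj fA fK fT fD hA hT hD X.
have f1 := antiautomorphism1 fA; have h1 := antiautomorphism1 hA.
have [fZ fDd _ fM] := fA; have [hZ hDd _ hM] := hA.
have hfK : cancel f h.
  apply: (endo_fixed (tau := h \o f)) Tirr Ddiag Dinj _ _ => /= [c Y|Y Z|Y Z|||].
  all: rewrite ?fZ ?hZ ?fDd ?hDd ?fM ?hM ?f1 ?h1 ?fT ?hT ?fD ?hD //.
by rewrite -{1}(fK X) hfK.
Qed.

Theorem theorem6p1 (K : fieldType) (d : nat) (A : algType K)
  (Hiso : exists rho : A -> 'M[K]_(d.+1), mx_alg_iso rho)
  (a as_ : A) (HLP : leonard_pair d a as_) :
  exists g : A -> A,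
    (antiautomorphism g /\ g a = a /\ g as_ = as_ /\ (forall X : A, g (g X) = X)) /\
    (forall h : A -> A, antiautomorphism h -> h a = a -> h as_ = as_ -> h =1 g).
Proof.
have [rho [rho_iso [[P [Pu [Ta Das]]] [Q [Qu [Tas _]]]]]] := HLP.
have [rinv rho_pair] := mx_alg_iso_pair rho_iso.
pose r x := invmx P *m rho x *m P; pose r' Y := rinv (P *m Y *m invmx P).
have r_pair : alg_iso_pair r r' := alg_iso_pair_conj rho_pair Pu.
have [_ _ _ rK rKV] := r_pair.
have D_inj := irr_tridiag_similar_diag_inj Pu Qu Tas Das.
have [S [Su ST fT fD]] := irr_tridiag_diag_trmx_conj Ta Das.
pose f := trmx_conj S; rewrite -/(r a) -/(r as_) -/(f (r a)) -/(f (r as_)) in fT fD.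
have fA : antiautomorphism f := trmx_conj_antiautomorphism Su ST.
have fK : involutive f := trmx_conjK Su ST.
exists (r' \o f \o r); split.
  split; first exact: antiautomorphism_transport.
  rewrite /= fT fD !rK; do 2!split=> //.
  by move=> X; rewrite rKV fK rK.
move=> h hA ha has X; apply: (can_inj rK); rewrite /= rKV.
have hA' := antiautomorphism_transport (alg_iso_pair_sym r_pair) hA.
have hr := antiautomorphism_mx_uniq Ta Das D_inj fA fK fT fD hA'.
by rewrite -hr /= rK ?ha ?has.
Qed.
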